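(* Consider the perturbed federated algorithm described in the context, run with parameter $\beta\in(0,1)$. Then for every round $t\ge 0$ and every local step $k\in\{0,\dots,E\}$, $$\sum_{i=1}^C p_i\,\widetilde{\mathbf{w}}_{t,k}^i=\beta\,\overline{\mathbf{w}}_{t,k}+(1-\beta)\,\overline{\mathbf{w}}_{t,0}.$$
   Context: There are $C$ clients with local objectives $F_i:\mathbb{R}^D\to\mathbb{R}$. Similarity weights $p_{in}\ge 0$ ($i,n\in\{1,\dots,C\}$) are symmetric ($p_{in}=p_{ni}$), satisfy $p_{ii}=0$, and $\sum_{i,n}p_{in}=1$. Set $p_i=\sum_{n=1}^C p_{in}$, which is assumed to be $>0$, so that $\sum_i p_i=1$. The algorithm has a parameter $\beta\in(0,1)$, a number $E\ge1$ of local steps and step sizes $\gamma_t>0$. All clients participate in every round. Given an initial point $\overline{\mathbf{w}}_{0,0}$, set $\mathbf{u}_0^i=\overline{\mathbf{w}}_{0,0}$ for all $i$. In round $t\ge0$, each client sets $\mathbf{w}_{t,0}^i=\overline{\mathbf{w}}_{t,0}$. For $k=0,\dots,E-1$ it forms the perturbed iterate $\widetilde{\mathbf{w}}_{t,k}^i=\beta\mathbf{w}_{t,k}^i+(1-\beta)\mathbf{u}_t^i$ and updates $\mathbf{w}_{t,k+1}^i=\mathbf{w}_{t,k}^i-\gamma_t\,g_i(\widetilde{\mathbf{w}}_{t,k}^i)$, where $g_i(\cdot)$ is a stochastic gradient of $F_i$. The perturbed iterate is defined by the same formula also for $k=E$. The average iterate is $\overline{\mathbf{w}}_{t,k}=\sum_i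 p_i\mathbf{w}_{t,k}^i$, and $\overline{\mathbf{w}}_{t+1,0}=\overline{\mathbf{w}}_{t,E}$. For $t\ge1$, $\mathbf{u}_t^i=\frac{1}{p_i}\sum_{n=1}^C p_{in}\mathbf{w}_{t-1,E}^n$. *)

From HB Require Import structures.
From mathcomp Require Import all_boot all_order all_algebra.
From mathcomp Require Import reals.
Set Implicit Arguments. Unset Strict Implicit. Unset Printing Implicit Defensive.
Import Order.TTheory GRing.Theory Num.Theory.
Local Open Scope ring_scope.

(* The stochastic gradient oracle is an arbitrary map
   [g t k i x] : the sample drawn by client i at round t, local step k, at x. *)

Section Algo.
Variables (R : realType) (C D E : nat).
Notation vec := 'rV[R]_D.
Variables (p : 'I_C -> 'I_C -> R) (beta : R) (gamma : nat -> R)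
  (g : nat -> nat -> 'I_C -> vec -> vec) (w00 : vec).

Definition pw (i : 'I_C) : R := \sum_(n < C) p i n.

(* local iterates w_{t,k}^i of round t, starting from wb = wbar_{t,0},
   with perturbation centers u = u_t^. *)
Fixpoint local (t : nat) (wb : vec) (u : 'I_C -> vec) (k : nat) (i : 'I_C)
  : vec :=
  match k with
  | 0 => wb
  | k'.+1 =>
      let w := local t wb u k' i in
      w - gamma t *: g t k' i (beta *: w + (1 - beta) *: u i)
  end.

(* state t = (wbar_{t,0}, u_t) *)
Fixpoint state (t : nat) : vec * ('I_C -> vec) :=
  match t with
  | 0 => (w00, fun _ => w00)
  | t'.+1 =>
      let wE := local t' (state t').1 (state t').2 E in
      (\sum_(i < C) pw i *: wE i,
       fun i => (pw i)^-1 *: \sum_(n < C) p i n *: wE n)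
  end.

Definition u (t : nat) (i : 'I_C) : vec := (state t).2 i.
Definition w (t k : nat) (i : 'I_C) : vec := local t (state t).1 (state t).2 k i.
Definition wtilde (t k : nat) (i : 'I_C) : vec :=
  beta *: w t k i + (1 - beta) *: u t i.
Definition wbar (t k : nat) : vec := \sum_(i < C) pw i *: w t k i.

End Algo.

From HB Require Import structures.
From mathcomp Require Import all_boot all_order all_algebra.
From mathcomp Require Import reals.
Import Order.TTheory GRing.Theory Num.Theory.
Local Open Scope ring_scope.

(* The perturbed iterate is affine in the pair (w, u), so its p-weighted mean
   is beta times the mean of the iterates plus (1 - beta) times the mean of the
   centres u_t^i.  That last mean is wbar_{t,0}: for t = 0 all centres equal
   the initial point, and for t > 0 the symmetry of p makes the neighbour
   averaging that produces the centres preserve the p-weighted mean. *)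

Section WeightedMeans.
Variables (F : fieldType) (V : lmodType F) (I : finType).

Lemma weighted_mean_affine (a : I -> F) (b c : F) (x y : I -> V) :
  \sum_i a i *: (b *: x i + c *: y i)
  = b *: \sum_i a i *: x i + c *: \sum_i a i *: y i.
Proof.
rewrite !scaler_sumr -big_split; apply: eq_bigr => i _.
by rewrite scalerDr !scalerA [a i * b]mulrC [a i * c]mulrC.
Qed.

Lemma weighted_mean_neighbour_average (q : I -> I -> F) (x : I -> V) :
  (forall i n, q i n = q n i) ->
  (forall i, \sum_n q i n != 0) ->
  \sum_i (\sum_n q i n) *: ((\sum_n q i n)^-1 *: \sum_n q i n *: x n)
  = \sum_n (\sum_i q n i) *: x n.
Proof.
move=> q_sym q_row_neq0.
under eq_bigr => i _ do rewrite scalerA mulfV ?scale1r //.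
rewrite exchange_big; apply: eq_bigr => n _.
by rewrite -scaler_suml; under eq_bigr => i _ do rewrite q_sym.
Qed.

End WeightedMeans.

Section PerturbedAlgorithm.
Variables (R : realType) (C D E : nat).
Variables (p : 'I_C -> 'I_C -> R) (beta : R) (gamma : nat -> R)
  (g : nat -> nat -> 'I_C -> 'rV[R]_D -> 'rV[R]_D) (w00 : 'rV[R]_D).
Hypothesis hp_sym : forall i n, p i n = p n i.
Hypothesis hp_sum : \sum_(i < C) \sum_(n < C) p i n = 1.
Hypothesis hpi_pos : forall i, 0 < pw p i.

Lemma sum_pw : \sum_i pw p i = 1.
Proof. exact: hp_sum. Qed.

Lemma wbar_round_start t :
  wbar E p beta gamma g w00 t 0 = (state E p beta gamma g w00 t).1.
Proof.
rewrite /wbar (eq_bigr (fun i => pw p i *: (state E p beta gamma g w00 t).1)) //.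
by rewrite -scaler_suml sum_pw scale1r.
Qed.

Lemma weighted_mean_u t :
  \sum_i pw p i *: u E p beta gamma g w00 t i
  = wbar E p beta gamma g w00 t 0.
Proof.
rewrite wbar_round_start /u; case: t => [|t] /=.
  by rewrite -scaler_suml sum_pw scale1r.
apply: weighted_mean_neighbour_average => // i.
exact: lt0r_neq0 (hpi_pos i).
Qed.

End PerturbedAlgorithm.

Theorem lemma1 (R : realType) (C D E : nat)
  (p : 'I_C -> 'I_C -> R) (beta : R) (gamma : nat -> R)
  (g : nat -> nat -> 'I_C -> 'rV[R]_D -> 'rV[R]_D) (w00 : 'rV[R]_D)
  (hp_ge0 : forall i n, 0 <= p i n)
  (hp_sym : forall i n, p i n = p n i)
  (hp_diag : forall i, p i i = 0)
  (hp_sum : \sum_(i < C) \sum_(n < C) p i n = 1)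
  (hpi_pos : forall i, 0 < pw p i)
  (hbeta : 0 < beta < 1)
  (hE : (1 <= E)%N)
  (hgamma : forall t, 0 < gamma t) :
  forall (t k : nat), (k <= E)%N ->
    \sum_(i < C) pw p i *: wtilde E p beta gamma g w00 t k i
    = beta *: wbar E p beta gamma g w00 t k
      + (1 - beta) *: wbar E p beta gamma g w00 t 0.
Proof.
move=> t k _.
by rewrite /wtilde weighted_mean_affine weighted_mean_u.
Qed.
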